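(* For all $n\ge0$ and $m>nt$, \[ \mathcal{L}^{(t)}_H\big(H^{(t)}_m(x)H^{(t)}_n(x)\big)=0 \quad\text{and}\quad \mathcal{L}^{(t)}_H\big(H^{(t)}_{nt}(x)H^{(t)}_n(x)\big)=\Big(\frac{t+1}{2}\Big)^{n}(nt)!. \]
   Context: Fix an integer $t\ge1$. A $t$-path in $K_n$ is a subgraph isomorphic to a path with $t$ edges. $H^{(t)}_n(x)=\sum_F(-1)^{|F|}x^{\,n-(t+1)|F|}$ over all families $F$ of pairwise vertex-disjoint $t$-paths in $K_n$ ($H^{(t)}_0=1$). Let $\mu^{(t)}_n$ be the number of coverings of all vertices of $K_n$ by pairwise vertex-disjoint $t$-paths ($\mu^{(t)}_0=1$), and let $\mathcal{L}^{(t)}_H$ be the linear functional with $\mathcal{L}^{(t)}_H(x^n)=\mu^{(t)}_n$. *)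

From HB Require Import structures.
From mathcomp Require Import all_boot all_order all_algebra.
Set Implicit Arguments. Unset Strict Implicit. Unset Printing Implicit Defensive.
Import Order.TTheory GRing.Theory Num.Theory.

(* Vertices of K_n are 'I_n; an edge is a 2-element set of vertices; a
   subgraph (without isolated vertices) is given by its edge set. *)

Definition path_edges (n t : nat) (f : {ffun 'I_t.+1 -> 'I_n}) : {set {set 'I_n}} :=
  [set [set f (inord i); f (inord i.+1)] | i : 'I_t].

(* P is a t-path in K_n: a subgraph isomorphic to a path with t edges,
   i.e. the edge set of some path through t+1 distinct vertices. *)
Definition is_tpath (n t : nat) (P : {set {set 'I_n}}) : bool :=
  [exists f : {ffun 'I_t.+1 -> 'I_n}, injectiveb f && (P == path_edges f)].

Definition verts (n : nat) (P : {set {set 'I_n}}) : {set 'I_n} :=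
  \bigcup_(e in P) e.

Definition is_tfamily (n t : nat) (F : {set {set {set 'I_n}}}) : bool :=
  [forall P in F, is_tpath t P] &&
  [forall P in F, forall Q in F, (P != Q) ==> [disjoint verts P & verts Q]].

Definition covers (n : nat) (F : {set {set {set 'I_n}}}) : bool :=
  \bigcup_(P in F) verts P == [set: 'I_n].

Local Open Scope ring_scope.

Definition Hpoly (t n : nat) : {poly rat} :=
  \sum_(F : {set {set {set 'I_n}}} | is_tfamily t F)
     (-1) ^+ #|F| *: 'X^(n - t.+1 * #|F|).

Definition mu (t n : nat) : nat :=
  #|[set F : {set {set {set 'I_n}}} | is_tfamily t F && covers F]|.

Definition LH (t : nat) (p : {poly rat}) : rat :=
  \sum_(i < size p) p`_i * (mu t i)%:R.

From HB Require Import structures.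
From mathcomp Require Import all_boot all_order all_algebra.
From mathcomp Require Import zify ring.
Set Implicit Arguments. Unset Strict Implicit. Unset Printing Implicit Defensive.
Import Order.TTheory GRing.Theory Num.Theory.

(* Write s = t+1.  The proof has a combinatorial half and an algebraic half.

   A t-path determines its vertex sequence up to reversal
   (the positions of its vertices form a unit-step walk without repetition),
   so a family of k disjoint t-paths of K_n is listed by exactly k! 2^k
   injective arrays 'I_k * 'I_s -> 'I_n.  Double counting gives
   n^_(ks) / (k! 2^k) such families, and such a family covers K_n iff ks = n.
   Hence H_m = sum_k (-1)^k m^_(ks)/(k! 2^k) x^(m-ks), and mu_j is
   j!/((j/s)! 2^(j/s)) when s divides j and 0 otherwise.

   The closed form yields the three-term recurrence
   H_(m+1) = x H_m - (s/2) m^_t H_(m-t), and a binomial-sum computation gives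
   L(H_m) = [m = 0].  The recurrence transfers to the moments L(x^j H_m),
   which therefore vanish for m > jt and equal (s/2)^j (jt)! for m = jt.
   Expanding the monic H_n in monomials of degree <= n gives the theorem. *)

Lemma walk_keeps_direction (t : nat) (p : nat -> nat) :
  (forall j, j < t -> p j.+1 = (p j).+1 \/ p j = (p j.+1).+1) ->
  (forall i j, i <= t -> j <= t -> p i = p j -> i = j) ->
  p 1 = (p 0).+1 -> forall j, j <= t -> p j = p 0 + j.
Proof.
move=> step inj p01.
have up j : j < t -> p j.+1 = (p j).+1.
  elim: j => [//|j IH] ltjt; have {}IH := IH (ltnW ltjt).
  case: (step j.+1 ltjt) => // back.
  by have := inj j j.+2 (ltnW (ltnW ltjt)) ltjt; lia.
elim=> [|j IH] lejt; first by rewrite addn0.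
by rewrite up // IH ?addnS // ltnW.
Qed.

Lemma unit_step_walk (t : nat) (p : nat -> nat) : 0 < t ->
  (forall j, j < t -> p j.+1 = (p j).+1 \/ p j = (p j.+1).+1) ->
  (forall i j, i <= t -> j <= t -> p i = p j -> i = j) ->
  (forall j, j <= t -> p j <= t) ->
  (forall j, j <= t -> p j = j) \/ (forall j, j <= t -> p j = t - j).
Proof.
move=> t_gt0 step inj bnd.
case: (step 0 t_gt0) => first_step.
  left=> j lejt; have incr := walk_keeps_direction step inj first_step.
  by have := incr j lejt; have := incr t (leqnn t); have := bnd t (leqnn t); lia.
(* the reflected walk t - p starts upwards *)
pose q j := t - p j.
have qstep j : j < t -> q j.+1 = (q j).+1 \/ q j = (q j.+1).+1.
  by move=> ltjt; have := bnd j (ltnW ltjt); have := bnd j.+1 ltjt;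
     case: (step j ltjt); rewrite /q; lia.
have qinj i j : i <= t -> j <= t -> q i = q j -> i = j.
  by move=> leit lejt eq_q; apply: inj => //; move: eq_q (bnd i leit) (bnd j lejt); rewrite /q; lia.
have q01 : q 1 = (q 0).+1 by move: first_step (bnd 0 (leq0n t)); rewrite /q; lia.
have incr := walk_keeps_direction qstep qinj q01.
right=> j lejt; have := incr j lejt; have := incr t (leqnn t).
by move: (bnd j lejt) (bnd t (leqnn t)); rewrite /q; lia.
Qed.

Lemma set2_eq (T : finType) (a b c d : T) :
  [set a; b] = [set c; d] -> (a = c /\ b = d) \/ (a = d /\ b = c).
Proof.
move=> E.
have ha : a \in [set c; d] by rewrite -E set21.
have hb : b \in [set c; d] by rewrite -E set22.
have hc : c \in [set a; b] by rewrite E set21.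
have hd : d \in [set a; b] by rewrite E set22.
by case/set2P: ha => ha; case/set2P: hb => hb; subst; auto;
   case/set2P: hc => hc; case/set2P: hd => hd; subst; auto.
Qed.

Section PathParametrizations.
Variables (n t : nat).
Hypothesis t_gt0 : 0 < t.
Local Notation param := {ffun 'I_t.+1 -> 'I_n}.

Lemma path_edgesP (f : param) e :
  reflect (exists i : 'I_t, e = [set f (inord i); f (inord i.+1)]) (e \in path_edges f).
Proof. by apply: (iffP imsetP) => [[i _ ->]|[i ->]]; exists i. Qed.

Lemma verts_path_edges (f : param) : verts (path_edges f) = [set f j | j in 'I_t.+1].
Proof.
apply/setP => v; apply/bigcupP/imsetP => [[e /path_edgesP[i ->]]|[j _ ->]].
  by case/set2P => ->; eexists.
have [ltjt|] := ltnP j t.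
  exists [set f (inord j); f (inord j.+1)]; first by apply/path_edgesP; exists (Ordinal ltjt).
  by rewrite inord_val set21.
(* the last vertex is the endpoint of the last edge *)
move=> lejt; have ejt : j = t :> nat by apply/eqP; rewrite eqn_leq lejt -ltnS ltn_ord.
have ltpt : t.-1 < t by rewrite prednK.
exists [set f (inord t.-1); f (inord t.-1.+1)]; first by apply/path_edgesP; exists (Ordinal ltpt).
have -> : inord t.-1.+1 = j by apply/val_inj; rewrite prednK //= inordK.
by rewrite set22.
Qed.

Definition path_rev (f : param) : param := [ffun i => f (rev_ord i)].

Lemma path_rev_inj (f : param) : injective f -> injective (path_rev f).
Proof. by move=> f_inj a b; rewrite !ffunE => /f_inj /rev_ord_inj. Qed.

Lemma path_edges_rev (f : param) : path_edges (path_rev f) = path_edges f.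
Proof.
have edge_rev (i : 'I_t) : [set path_rev f (inord i); path_rev f (inord i.+1)] =
    [set f (inord (rev_ord i)); f (inord (rev_ord i).+1)].
  rewrite !ffunE setUC; have lt_it := ltn_ord i.
  by congr [set f _; f _]; apply/val_inj; rewrite /= !inordK; lia.
apply/setP => e; apply/path_edgesP/path_edgesP => -[i ->].
  by exists (rev_ord i); rewrite edge_rev.
by exists (rev_ord i); rewrite edge_rev rev_ordK.
Qed.

(* A path determines its parametrization up to reversal: the positions in f
   of the successive vertices of g form a unit-step walk without repetition. *)
Lemma path_edges_inj (f g : param) : injective f -> injective g ->
  path_edges f = path_edges g -> g = f \/ g = path_rev f.
Proof.
move=> f_inj g_inj E.
have pos_ex j : exists k, f k = g j.
  have : g j \in verts (path_edges g) by rewrite verts_path_edges imset_f.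
  by rewrite -E verts_path_edges => /imsetP[k _ ->]; exists k.
have [pos pos_spec] := fin_all_exists pos_ex.
pose p j := nat_of_ord (pos (inord j)).
have step j : j < t -> p j.+1 = (p j).+1 \/ p j = (p j.+1).+1.
  move=> ltjt; have : [set g (inord j); g (inord j.+1)] \in path_edges f.
    by rewrite E; apply/path_edgesP; exists (Ordinal ltjt).
  case/path_edgesP=> k; rewrite -!pos_spec => /set2_eq[[/f_inj e1 /f_inj e2]|[/f_inj e1 /f_inj e2]].
    by left; rewrite /p e1 e2 !inordK // ltnS ?ltn_ord // ltnW.
  by right; rewrite /p e1 e2 !inordK // ltnS ?ltn_ord // ltnW.
have inj i j : i <= t -> j <= t -> p i = p j -> i = j.
  move=> leit lejt /val_inj /(congr1 f); rewrite !pos_spec => /g_inj /(congr1 val).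
  by rewrite /= !inordK.
have bnd j : j <= t -> p j <= t by move=> _; rewrite -ltnS ltn_ord.
case: (unit_step_walk t_gt0 step inj bnd) => walk; [left|right];
  apply/ffunP => j; rewrite ?ffunE -pos_spec; congr (f _); apply/val_inj;
  by have := walk j (ltn_ord j); rewrite /p inord_val /= ?subSS.
Qed.

Lemma card_path_params (f : param) : injective f ->
  #|[set g : param | injectiveb g && (path_edges g == path_edges f)]| = 2.
Proof.
move=> f_inj.
have -> : [set g : param | injectiveb g && (path_edges g == path_edges f)] = [set f; path_rev f].
  apply/setP => g; rewrite !inE; apply/andP/orP => [[/injectiveP g_inj /eqP E]|].
    by case: (path_edges_inj f_inj g_inj (esym E)) => ->; [left|right].
  case=> /eqP ->; rewrite ?path_edges_rev; split=> //; apply/injectiveP => //.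
  exact: path_rev_inj.
rewrite cards2; case: eqP => // /(congr1 (fun h : param => h ord0)).
by rewrite ffunE => /f_inj /(congr1 val) /=; rewrite subn1 /= => t0; move: t_gt0; rewrite -t0.
Qed.

End PathParametrizations.

Lemma card_fibers (T U : finType) (A : {set T}) (B : {set U}) (p : T -> U) :
  {in A, forall x, p x \in B} -> #|A| = \sum_(b in B) #|[set x in A | p x == b]|.
Proof.
move=> pAB; rewrite -sum1_card (partition_big p (mem B)) //=.
by apply: eq_bigr => b _; rewrite -sum1_card; apply: eq_bigl => x; rewrite !inE.
Qed.

Section DisjointFamilies.
Variables (n t : nat).
Hypothesis t_gt0 : 0 < t.
Local Notation param := {ffun 'I_t.+1 -> 'I_n}.
Local Notation pathfam := {set {set {set 'I_n}}}.

Lemma tfamily_path (F : pathfam) P : is_tfamily t F -> P \in F ->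
  exists f : param, injective f /\ P = path_edges f.
Proof.
case/andP=> /forallP/(_ P) + _ PF; rewrite PF => /existsP[f /andP[/injectiveP f_inj /eqP ->]].
by exists f.
Qed.

Lemma tfamily_disjoint (F : pathfam) P Q : is_tfamily t F -> P \in F -> Q \in F ->
  P != Q -> [disjoint verts P & verts Q].
Proof. by case/andP=> _ /forallP/(_ P) + PF QF PQ; rewrite PF => /forallP/(_ Q); rewrite QF PQ. Qed.

(* An injective array g : 'I_k * 'I_(t+1) -> 'I_n lists k disjoint t-paths,
   the i-th one being parametrized by the i-th row of g. *)
Variable k : nat.
Local Notation array := {ffun 'I_k * 'I_t.+1 -> 'I_n}.

Definition row_param (g : array) (i : 'I_k) : param := [ffun j => g (i, j)].
Definition row_paths (g : array) : {ffun 'I_k -> {set {set 'I_n}}} :=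
  [ffun i => path_edges (row_param g i)].
Definition array_family (g : array) : pathfam := [set row_paths g i | i : 'I_k].

Lemma row_param_inj (g : array) i : injective g -> injective (row_param g i).
Proof. by move=> g_inj a b; rewrite !ffunE => /g_inj [->]. Qed.

Lemma verts_row (g : array) i : verts (row_paths g i) = [set g (i, j) | j in 'I_t.+1].
Proof.
rewrite ffunE verts_path_edges //.
by apply/setP => v; apply/imsetP/imsetP => -[j _ ->]; exists j; rewrite ?ffunE.
Qed.

Lemma rows_disjoint (g : array) i i' : injective g -> i != i' ->
  [disjoint verts (row_paths g i) & verts (row_paths g i')].
Proof.
move=> g_inj ii'; rewrite !verts_row; apply/pred0P => v /=.
apply/negbTE/negP => /andP[/imsetP[j _ ->] /imsetP[j' _ /g_inj [eq_i _]]].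
by rewrite eq_i eqxx in ii'.
Qed.

Lemma row_paths_inj (g : array) : injective g -> injective (row_paths g).
Proof.
move=> g_inj i i' E; apply/eqP; apply: contraTT isT => ii'.
have /pred0P/(_ (g (i', ord0))) := rows_disjoint g_inj ii'.
rewrite /= E andbb verts_row.
by have -> : g (i', ord0) \in [set g (i', j) | j in 'I_t.+1] by apply/imsetP; exists ord0.
Qed.

Lemma card_array_family (g : array) : injective g -> #|array_family g| = k.
Proof. by move=> g_inj; rewrite card_imset ?card_ord //; apply: row_paths_inj. Qed.

Lemma array_family_tfamily (g : array) : injective g -> is_tfamily t (array_family g).
Proof.
move=> g_inj; apply/andP; split; apply/forallP => P; apply/implyP => /imsetP[i _ ->].
  by apply/existsP; exists (row_param g i); rewrite ffunE eqxx andbT; apply/injectiveP/row_param_inj.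
apply/forallP => Q; apply/implyP => /imsetP[i' _ ->]; apply/implyP => neq.
by apply: rows_disjoint => //; apply: contraNneq neq => ->.
Qed.

(* Arrays listing a given injective labelling h of paths of a t-family:
   each row may be either parametrization of its path, whence 2^k arrays. *)
Lemma card_labelled_arrays (F : pathfam) (h : {ffun 'I_k -> {set {set 'I_n}}}) :
  is_tfamily t F -> injective h -> (forall i, h i \in F) ->
  #|[set g : array | injectiveb g && (row_paths g == h)]| = 2 ^ k.
Proof.
move=> tfamF h_inj hF.
pose R i := [set f : param | injectiveb f && (path_edges f == h i)].
pose S := [set r : {ffun 'I_k -> param} | [forall i, r i \in R i]].
pose glue (r : {ffun 'I_k -> param}) : array := [ffun p => r p.1 p.2].
have glue_inj : injective glue.
  move=> r r' E; apply/ffunP => i; apply/ffunP => j.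
  by have := congr1 (fun g : array => g (i, j)) E; rewrite !ffunE.
have -> : [set g : array | injectiveb g && (row_paths g == h)] = glue @: S.
  apply/setP => g; rewrite !inE; apply/andP/imsetP.
  - case=> /injectiveP g_inj /eqP E; exists [ffun i => row_param g i].
      rewrite inE; apply/forallP => i; rewrite ffunE inE -E ffunE eqxx andbT.
      exact/injectiveP/row_param_inj.
    by apply/ffunP => -[i j]; rewrite !ffunE.
  - case=> r; rewrite inE => /forallP rS ->.
    have rR i : injective (r i) /\ path_edges (r i) = h i.
      by have := rS i; rewrite inE => /andP[/injectiveP ? /eqP ?].
    split.
      (* distinct rows parametrize disjoint paths *)
      apply/injectiveP => -[i j] [i' j']; rewrite !ffunE /=.
      have [<-|neq] := eqVneq i i' => eq_r; first by rewrite ((rR i).1 _ _ eq_r).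
      have hneq : h i != h i' by apply: contra_neq neq => /h_inj.
      have := tfamily_disjoint tfamF (hF i) (hF i') hneq.
      rewrite -(rR i).2 -(rR i').2 !verts_path_edges // => /pred0P/(_ (r i j)) /=.
      by rewrite imset_f // eq_r imset_f.
    apply/eqP/ffunP => i; rewrite !ffunE -(rR i).2; congr path_edges.
    by apply/ffunP => j; rewrite !ffunE.
rewrite card_imset // (_ : #|S| = #|(family R : simpl_pred {ffun 'I_k -> param})|); last first.
  by apply: eq_card => r; rewrite inE; apply/forallP/familyP.
rewrite card_family foldrE big_image /= (eq_bigr (fun _ => 2)) ?prod_nat_const ?card_ord //.
by move=> i _; have [f [f_inj hE]] := tfamily_path tfamF (hF i); rewrite /R hE card_path_params.
Qed.

(* A t-family of k paths is listed by exactly k! 2^k injective arrays: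
   k! labellings of its paths, and 2^k arrays per labelling. *)
Lemma card_family_arrays (F : pathfam) : is_tfamily t F -> #|F| = k ->
  #|[set g : array | injectiveb g && (array_family g == F)]| = k`! * 2 ^ k.
Proof.
move=> tfamF cardF.
pose labellings := [set h : {ffun 'I_k -> {set {set 'I_n}}} in ffun_on (mem F) | injectiveb h].
have card_lab : #|labellings| = k`!.
  by rewrite card_inj_ffuns_on card_ord -ffactnn -cardF.
rewrite (@card_fibers _ _ _ labellings row_paths); last first.
  move=> g; rewrite !inE => /andP[/injectiveP g_inj /eqP <-].
  apply/andP; split; last exact/injectiveP/row_paths_inj.
  by apply/forallP => i; apply: imset_f.
rewrite -card_lab -sum_nat_const; apply: eq_bigr => h; rewrite inE => /andP[/ffun_onP hF /injectiveP h_inj].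
rewrite -(card_labelled_arrays tfamF h_inj hF); apply: eq_card => g; rewrite !inE.
case: (injectiveb g) => //=; case: (row_paths g =P h) => [rowsE|]; rewrite ?andbF // andbT.
(* a labelling of F by k distinct paths of F exhausts F *)
rewrite /array_family rowsE eqEcard (card_imset _ h_inj) card_ord cardF leqnn andbT.
by apply/subsetP => P /imsetP[i _ ->]; apply: hF.
Qed.

End DisjointFamilies.

Section CountingFamilies.
Variables (n t : nat).
Hypothesis t_gt0 : 0 < t.
Local Notation pathfam := {set {set {set 'I_n}}}.

Definition tfamilies (k : nat) : {set pathfam} := [set F | is_tfamily t F && (#|F| == k)].

(* Double counting of the injective arrays 'I_k * 'I_(t+1) -> 'I_n. *)
Lemma card_tfamilies k : #|tfamilies k| * (k`! * 2 ^ k) = n ^_ (k * t.+1).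
Proof.
have card_arrays : #|[set g : {ffun 'I_k * 'I_t.+1 -> 'I_n} | injectiveb g]| = n ^_ (k * t.+1).
  by rewrite card_inj_ffuns card_prod !card_ord.
rewrite -card_arrays (@card_fibers _ _ _ (tfamilies k) (@array_family n t k)); last first.
  move=> g; rewrite !inE => /injectiveP g_inj.
  by rewrite array_family_tfamily // card_array_family // eqxx.
rewrite -sum_nat_const; apply: eq_bigr => F; rewrite inE => /andP[tfamF /eqP cardF].
rewrite -(card_family_arrays t_gt0 tfamF cardF); apply: eq_card => g; rewrite !inE.
by case: (injectiveb g).
Qed.

Lemma tfamily_array (F : pathfam) : is_tfamily t F ->
  exists g : {ffun 'I_#|F| * 'I_t.+1 -> 'I_n}, injective g /\ array_family g = F.
Proof.
move=> tfamF; have := card_family_arrays t_gt0 tfamF (erefl _).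
have : 0 < #|F|`! * 2 ^ #|F| by rewrite muln_gt0 fact_gt0 expn_gt0.
move=> /[swap] <- /card_gt0P[g]; rewrite !inE => /andP[/injectiveP g_inj /eqP famE].
by exists g.
Qed.

Lemma tfamily_size (F : pathfam) : is_tfamily t F -> #|F| * t.+1 <= n.
Proof.
case/tfamily_array=> g [g_inj _].
by have := leq_card _ g_inj; rewrite card_prod !card_ord.
Qed.

Lemma covers_tfamily (F : pathfam) : is_tfamily t F -> covers F = (#|F| * t.+1 == n).
Proof.
move=> tfamF; have [g [g_inj famE]] := tfamily_array tfamF; rewrite /covers.
have -> : \bigcup_(P in F) verts P = [set g x | x in [set: 'I_#|F| * 'I_t.+1]].
  rewrite -{1}famE; apply/setP => v; apply/bigcupP/imsetP.
    by case=> _ /imsetP[i _ ->]; rewrite verts_row // => /imsetP[j _ ->]; exists (i, j).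
  case=> -[i j] _ ->; exists (row_paths g i); first exact: imset_f.
  by rewrite verts_row //; apply/imsetP; exists j.
rewrite eqEcard subsetT cardsT card_ord card_imset // cardsT card_prod !card_ord.
by rewrite eqn_leq tfamily_size.
Qed.

End CountingFamilies.

Lemma ffactD m a b : m ^_ (a + b) = m ^_ a * (m - a) ^_ b.
Proof.
elim: b => [|b IH]; first by rewrite addn0 ffactn0 muln1.
by rewrite addnS !ffactnSr IH subnDA mulnA.
Qed.

Lemma ffactS_pascal m N : m.+1 ^_ N.+1 = m ^_ N.+1 + N.+1 * m ^_ N.
Proof.
rewrite ffactSS ffactnSr; have [leNm|ltmN] := leqP N m.
  by rewrite [N.+1 * _]mulnC -mulnDr addnS subnK // mulnC.
by rewrite ffact_small // !muln0 mul0n.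
Qed.

Local Open Scope ring_scope.

Section ClosedForms.
Variable t : nat.
Hypothesis t_gt0 : (0 < t)%N.
Local Notation s := t.+1.

(* The number of t-families of k paths in K_m, m^_(k(t+1)) / (k! 2^k). *)
Definition nfam (m k : nat) : rat := (m ^_ (k * s))%:R / (k`! * 2 ^ k)%:R.

Lemma nfam_den_neq0 k : (k`! * 2 ^ k)%:R != 0 :> rat.
Proof. by rewrite pnatr_eq0 muln_eq0 negb_or -!lt0n fact_gt0 expn_gt0. Qed.

Lemma card_tfamiliesE m k : (#|tfamilies m t k|)%:R = nfam m k.
Proof. by rewrite /nfam -(card_tfamilies m t_gt0 k) natrM mulfK ?nfam_den_neq0. Qed.

Lemma tfamily_card_le m (F : {set {set {set 'I_m}}}) : is_tfamily t F -> (#|F| <= m)%N.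
Proof. by move/(tfamily_size t_gt0); apply: leq_trans; rewrite leq_pmulr. Qed.

Definition Hterm (m k : nat) : {poly rat} := ((-1) ^+ k * nfam m k) *: 'X^(m - k * s).

Lemma Hpoly_closed m : Hpoly t m = \sum_(k < m.+1) Hterm m k.
Proof.
rewrite /Hpoly (partition_big (fun F : {set {set {set 'I_m}}} => inord #|F| : 'I_m.+1) predT) //=.
apply: eq_bigr => k _.
rewrite (eq_bigr (fun _ => (-1) ^+ k *: 'X^(m - k * s))); last first.
  by move=> F /andP[/tfamily_card_le le_Fm /eqP <-]; rewrite inordK // mulnC.
rewrite sumr_const /Hterm -scaler_nat scalerA mulrC -card_tfamiliesE.
congr (_ * _%:R *: _); apply: eq_card => F; rewrite !inE unfold_in /=.
case tfamF: (is_tfamily t F) => //=; have le_Fm := tfamily_card_le tfamF.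
by apply/eqP/eqP => [<-|eq_F]; [rewrite inordK|apply/val_inj; rewrite /= inordK // eq_F].
Qed.

(* Only families of j/(t+1) paths can cover K_j. *)
Lemma mu_closed j : (mu t j)%:R = if (s %| j)%N then nfam j (j %/ s) else 0.
Proof.
have coverE (F : {set {set {set 'I_j}}}) :
    is_tfamily t F && covers F = is_tfamily t F && (#|F| * s == j)%N.
  by case tfamF: (is_tfamily t F); rewrite //= (covers_tfamily t_gt0 tfamF).
rewrite /mu; case: dvdnP => [[q def_j]|not_dvd].
  have -> : (j %/ s = q)%N by rewrite def_j mulnK.
  rewrite -card_tfamiliesE; congr _%:R; apply: eq_card => F.
  by rewrite !inE coverE; congr (_ && _); move: #|F| => c; rewrite def_j eqn_pmul2r.
rewrite (_ : [set F | _] = set0) ?cards0 //; apply/setP => F; rewrite !inE coverE.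
apply/negP => /andP[_ /eqP card_F]; apply: not_dvd; exists #|F|.
by move: #|F| card_F => c <-.
Qed.

End ClosedForms.

Lemma sum_ord_widen0 (R : zmodType) N1 N2 (F : nat -> R) : (N1 <= N2)%N ->
  (forall i, (N1 <= i)%N -> F i = 0) -> \sum_(i < N1) F i = \sum_(i < N2) F i.
Proof.
move=> le12 F0; rewrite (big_ord_widen _ _ le12) big_mkcond /=; apply: eq_bigr => i _.
by case: ifP => // /negbT; rewrite -leqNgt => /F0 ->.
Qed.

Section LinearFunctional.
Variable t : nat.

Lemma LH_widen (p : {poly rat}) N : (size p <= N)%N ->
  LH t p = \sum_(i < N) p`_i * (mu t i)%:R.
Proof.
move=> le_pN; apply: (sum_ord_widen0 (F := fun i => p`_i * (mu t i)%:R)) => // i le_pi.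
by rewrite nth_default ?mul0r.
Qed.

Lemma LH0 : LH t 0 = 0.
Proof. by rewrite /LH size_poly0 big_ord0. Qed.

Lemma LHD (p q : {poly rat}) : LH t (p + q) = LH t p + LH t q.
Proof.
rewrite !(@LH_widen _ (maxn (size p) (size q))) ?leq_maxl ?leq_maxr ?size_polyD //.
by rewrite -big_split; apply: eq_bigr => i _; rewrite coefD mulrDl.
Qed.

Lemma LHZ c (p : {poly rat}) : LH t (c *: p) = c * LH t p.
Proof.
rewrite !(@LH_widen _ (size p)) ?size_scale_leq // mulr_sumr.
by apply: eq_bigr => i _; rewrite coefZ mulrA.
Qed.

Lemma LH_sum (I : Type) (r : seq I) (P : pred I) (F : I -> {poly rat}) :
  LH t (\sum_(i <- r | P i) F i) = \sum_(i <- r | P i) LH t (F i).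
Proof. exact: (big_morph (LH t) LHD LH0). Qed.

Lemma LH_Xn i : LH t 'X^i = (mu t i)%:R.
Proof.
rewrite (@LH_widen _ i.+1) ?size_polyXn // big_ord_recr /= big1 => [|j _].
  by rewrite add0r coefXn eqxx mul1r.
by rewrite coefXn ltn_eqF ?mul0r.
Qed.

End LinearFunctional.

Section ThreeTermRecurrence.
Variable t : nat.
Hypothesis t_gt0 : (0 < t)%N.
Local Notation s := t.+1.
Local Notation nfam := (nfam t).
Local Notation Hterm := (Hterm t).

Definition rec_coef (m : nat) : rat := s%:R / 2%:R * (m ^_ t)%:R.

Lemma nfam_small m k : (m < k * s)%N -> nfam m k = 0.
Proof. by move=> lt_m; rewrite /nfam ffact_small // mul0r. Qed.

Lemma nfam0 m : nfam m 0 = 1.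
Proof. by rewrite /nfam mul0n ffactn0 /= divr1. Qed.

(* Families in K_(m+1) either avoid the last vertex or use it in one of
   their k+1 paths, at one of the t+1 positions of that path. *)
Lemma nfam_rec m k : nfam m.+1 k.+1 = nfam m k.+1 + rec_coef m * nfam (m - t) k.
Proof.
have ffact_rec : (m.+1 ^_ (k.+1 * s) =
    m ^_ (k.+1 * s) + k.+1 * s * (m ^_ t * (m - t) ^_ (k * s)))%N.
  by rewrite -ffactD mulSn addSn ffactS_pascal mulnC.
have den_rec : ((k.+1)`! * 2 ^ k.+1 = 2 * k.+1 * (k`! * 2 ^ k))%N.
  by rewrite factS expnS; ring.
rewrite /nfam /rec_coef ffact_rec den_rec.
have := nfam_den_neq0 k; move: (k`! * 2 ^ k)%N => d d_neq0.
move: (m ^_ (k.+1 * s))%N (m ^_ t)%N ((m - t) ^_ (k * s))%N => a b c.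
rewrite natrD !natrM; field.
by rewrite d_neq0 addrC natr1 pnatr_eq0.
Qed.

Lemma Hterm_small m k : (m < k * s)%N -> Hterm m k = 0.
Proof. by move=> lt_m; rewrite /Hterm nfam_small // mulr0 scale0r. Qed.

Lemma Hterm_rec m k : Hterm m.+1 k.+1 = 'X * Hterm m k.+1 - rec_coef m *: Hterm (m - t) k.
Proof.
rewrite /Hterm nfam_rec; have [le_m|lt_m] := leqP (k.+1 * s) m.
  have -> : (m.+1 - k.+1 * s = (m - k.+1 * s).+1)%N by lia.
  have -> : (m - t - k * s = (m - k.+1 * s).+1)%N by lia.
  rewrite -scalerAr -exprS scalerA -scalerBl exprS; congr (_ *: _); ring.
rewrite nfam_small // add0r mulr0 scale0r mulr0 sub0r.
have [eq_m|lt_m'] := eqVneq m.+1 (k.+1 * s).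
  (* the only family is a covering one: both sides are constants *)
  have -> : (m.+1 - k.+1 * s = 0)%N by lia.
  have -> : (m - t - k * s = 0)%N by lia.
  by rewrite scalerA -scaleNr exprS; congr (_ *: _); ring.
(* both sides vanish: too few vertices for k+1 paths *)
have lt_m1 : (m.+1 < k.+1 * s)%N by rewrite ltn_neqAle lt_m' lt_m.
have vanish : rec_coef m * nfam (m - t) k = 0.
  rewrite (_ : _ * _ = s%:R / 2%:R * ((m ^_ (t + k * s))%:R / (k`! * 2 ^ k)%:R)).
    by rewrite ffact_small ?mul0r ?mulr0 //; lia.
  by rewrite ffactD natrM /rec_coef /nfam !mulrA.
by rewrite vanish mulr0 scale0r scalerA mulrCA vanish mulr0 scale0r oppr0.
Qed.

Lemma Hpoly_widen m N : (m < N)%N -> Hpoly t m = \sum_(k < N) Hterm m k.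
Proof.
rewrite Hpoly_closed // => lt_mN; apply: sum_ord_widen0 => // k lt_mk.
by apply: Hterm_small; rewrite (leq_trans lt_mk) // leq_pmulr.
Qed.

Lemma Hpoly_rec m : Hpoly t m.+1 = 'X * Hpoly t m - rec_coef m *: Hpoly t (m - t).
Proof.
rewrite (@Hpoly_widen m m.+2) // (@Hpoly_widen (m - t) m.+1) ?ltnS ?leq_subr //.
rewrite Hpoly_closed // big_ord_recl [X in 'X * X]big_ord_recl mulrDr mulr_sumr scaler_sumr.
rewrite -addrA -sumrB; congr (_ + _).
  by rewrite /Hterm !nfam0 !mulr1 !expr0 !scale1r mul0n !subn0 exprS.
by apply: eq_bigr => i _; rewrite lift0 Hterm_rec.
Qed.

Lemma coef_Hpoly_gt m i : (m < i)%N -> (Hpoly t m)`_i = 0.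
Proof.
move=> lt_mi; rewrite Hpoly_closed // coef_sum big1 // => k _; rewrite coefZ coefXn.
by rewrite gtn_eqF ?mulr0 // (leq_ltn_trans (leq_subr _ _) lt_mi).
Qed.

Lemma size_Hpoly m : (size (Hpoly t m) <= m.+1)%N.
Proof. by apply/leq_sizeP => i; apply: coef_Hpoly_gt. Qed.

Lemma Hpoly_lead m : (Hpoly t m)`_m = 1.
Proof.
rewrite Hpoly_closed // coef_sum big_ord_recl big1 => [|k _].
  by rewrite addr0 /Hterm coefZ coefXn nfam0 mul0n subn0 eqxx !mulr1.
rewrite /Hterm lift0 coefZ coefXn; have [lt_m|le_m] := ltnP m (k.+1 * s).
  by rewrite nfam_small // mulr0 mul0r.
by rewrite (_ : (m == m - k.+1 * s)%N = false) ?mulr0 //; lia.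
Qed.

End ThreeTermRecurrence.

Lemma poly_expand (R : nzRingType) (p : {poly R}) N : (size p <= N)%N ->
  p = \sum_(i < N) p`_i *: 'X^i.
Proof.
move=> le_pN; rewrite -[LHS]coefK poly_def.
by apply: (sum_ord_widen0 (F := fun i => p`_i *: 'X^i)) => // i le_pi; rewrite nth_default ?scale0r.
Qed.

Section Orthogonality.
Variable t : nat.
Hypothesis t_gt0 : (0 < t)%N.
Local Notation s := t.+1.
Local Notation nfam := (nfam t).

(* Choosing k of the q paths of a covering of K_(q(t+1)), and covering the
   rest by the remaining q-k paths, counts each covering 'C(q, k) times. *)
Lemma nfam_complement q k : (k <= q)%N ->
  nfam (q * s) k * nfam ((q - k) * s) (q - k) =
  'C(q, k)%:R * (((q * s)`!)%:R / (q`! * 2 ^ q)%:R).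
Proof.
move=> le_kq; rewrite /nfam ffactnn mulf_div -[('C(q, k)%:R)]divr1 mulf_div -!natrM mul1r.
apply/eqP; rewrite eqr_div ?pnatr_eq0 ?muln_eq0 ?negb_or -?lt0n ?fact_gt0 ?expn_gt0 //.
rewrite -!natrM eqr_nat; apply/eqP.
have split_fact : ((q * s) ^_ (k * s) * ((q - k) * s)`! = (q * s)`!)%N.
  by rewrite mulnBl ffact_fact // leq_mul2r le_kq orbT.
have split_pow : (2 ^ k * 2 ^ (q - k) = 2 ^ q)%N by rewrite -expnD subnKC.
rewrite -split_fact -{1}(bin_fact le_kq) -{1}split_pow.
by move: ((q * s) ^_ (k * s))%N (((q - k) * s)`!) k`! (q - k)`! (2 ^ k)%N (2 ^ (q - k))%N 'C(q, k)
  => a b c d e f g; ring.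
Qed.

(* L(H_m) = [m = 0]: for m = q(t+1) the alternating sum collapses to (1-1)^q. *)
Lemma LH_Hpoly m : LH t (Hpoly t m) = (m == 0)%:R.
Proof.
rewrite Hpoly_closed // LH_sum; under eq_bigr => k _ do rewrite /Hterm LHZ LH_Xn.
have [/dvdnP[q def_m]|not_dvd] := boolP (s %| m)%N; last first.
  (* no covering of K_(m - k(t+1)) exists *)
  rewrite big1 => [|k _]; first by case: eqP not_dvd => // ->; rewrite dvdn0.
  have [le_km|lt_mk] := leqP (k * s) m; last by rewrite nfam_small ?mulr0 ?mul0r.
  rewrite mu_closed // ifF ?mulr0 //; apply: contraNF not_dvd => dvd_sub.
  by rewrite -(subnK le_km) dvdn_add // dvdn_mull.
(* only families of at most q paths contribute *)
rewrite def_m -(@sum_ord_widen0 _ q.+1 _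
  (fun k => (-1) ^+ k * nfam (q * s) k * (mu t (q * s - k * s))%:R)); last first.
- by move=> k lt_qk; rewrite nfam_small ?mulr0 ?mul0r // ltn_pmul2r.
- by rewrite ltnS leq_pmulr.
under eq_bigr => k _ do rewrite -mulnBl mu_closed // dvdn_mull // mulnK // -mulrA
  (@nfam_complement q k (ltn_ord k)) [(-1) ^+ k * _]mulrA.
rewrite -mulr_suml.
have -> : \sum_(k < q.+1) (-1) ^+ k * 'C(q, k)%:R = (1 - 1) ^+ q :> rat.
  by rewrite exprBn; apply: eq_bigr => k _; rewrite !expr1n !mulr1 mulr_natr.
rewrite subrr expr0n; case: q {def_m} => [|q] /=; last by rewrite mul0r.
by rewrite mul0n fact0 expn0 muln1 divr1.
Qed.

Definition moment (j m : nat) : rat := LH t ('X^j * Hpoly t m).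

Lemma moment_rec j m : moment j.+1 m = moment j m.+1 + rec_coef t m * moment j (m - t).
Proof.
have XH : 'X * Hpoly t m = Hpoly t m.+1 + rec_coef t m *: Hpoly t (m - t).
  by rewrite Hpoly_rec // subrK.
by rewrite /moment exprS -mulrA mulrCA XH mulrDr LHD -scalerAr LHZ.
Qed.

Lemma moment_vanish j m : (j * t < m)%N -> moment j m = 0.
Proof.
elim: j m => [|j IH] m lt_m; first by rewrite /moment mul1r LH_Hpoly // gtn_eqF.
by rewrite moment_rec !IH ?mulr0 ?addr0 //; lia.
Qed.

(* ... and at m = jt only the leading term of the recurrence survives. *)
Lemma moment_diag j : moment j (j * t) = (s%:R / 2%:R) ^+ j * ((j * t)`!)%:R.
Proof.
elim: j => [|j IH]; first by rewrite /moment mul1r mul0n LH_Hpoly // expr0 mul1r.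
rewrite moment_rec moment_vanish ?add0r; last by lia.
have jtE : (j.+1 * t - t = j * t)%N by rewrite mulSn addKn.
rewrite jtE IH /rec_coef exprS -!mulrA; congr (_ * (_ * _)).
rewrite mulrCA -natrM -jtE ffact_fact //; lia.
Qed.

Lemma LH_Hpoly_mul m n :
  LH t (Hpoly t m * Hpoly t n) = \sum_(i < n.+1) (Hpoly t n)`_i * moment i m.
Proof.
rewrite {1}(poly_expand (size_Hpoly t_gt0 n)) mulr_sumr LH_sum; apply: eq_bigr => i _.
by rewrite -scalerAr LHZ [Hpoly t m * _]mulrC.
Qed.

End Orthogonality.

Theorem mainTheorem13 (t : nat) (ht : (1 <= t)%N) :
  (forall n m : nat, (n * t < m)%N -> LH t (Hpoly t m * Hpoly t n) = 0) /\
  (forall n : nat,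
     LH t (Hpoly t (n * t) * Hpoly t n) = ((t.+1)%:R / 2%:R) ^+ n * ((n * t)`!)%:R).
Proof.
split=> [n m lt_m | n]; rewrite LH_Hpoly_mul //.
  rewrite big1 // => i _; rewrite moment_vanish ?mulr0 //.
  by rewrite (leq_ltn_trans _ lt_m) // leq_mul2r -ltnS ltn_ord orbT.
rewrite big_ord_recr /= Hpoly_lead // mul1r moment_diag // big1 ?add0r // => i _.
by rewrite moment_vanish ?mulr0 // ltn_pmul2r.
Qed.
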